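(* Let the switch times returned by Algorithm 1 (described in the context) be $(t_k,t_{k-1},\dots,t_1)$ with $t_k<\dots<t_1$. Then for any feasible switch time sequence $(t'_{k'},t'_{k'-1},\dots,t'_1)$ we have $t_i\le t'_i$ for all $i$ with $1\le i\le\min(k,k')$.
   Context: Let $\mathcal{S}=\{s^{(1)},\dots,s^{(n)}\}$ and $\mathcal{A}=\{a^{(1)},\dots,a^{(m)}\}$ be finite sets, $\mathcal{T}:\mathcal{S}\times\mathcal{A}\to\Delta(\mathcal{S})$ a Markov transition kernel, $\gamma\in[0,1]$, and $T\ge1$ an integer horizon. Let $\pi^{\mathrm{E}}=(\pi^{\mathrm{E}}_t)_{t=0}^{T-1}$ be a time-varying policy with each $\pi^{\mathrm{E}}_t(\cdot|s)$ a probability distribution on $\mathcal{A}$ and $\pi^{\mathrm{E}}_t(a|s)\in(0,1]$. For $k=1,\dots,m$ let $P_{a^{(k)}}\in\mathbb{R}^{n\times n}$ have $(i,j)$ entry $\mathcal{T}(s^{(j)}|s^{(i)},a^{(k)})$, $\mathbf{P}=\begin{bmatrix}P_{a^{(1)}}^\top&\cdots&P_{a^{(m)}}^\top\end{bmatrix}^\top\in\mathbb{R}^{mn\times n}$, $\mathbf{E}=\mathbf{1}_m\otimes\mathbf{I}_n$. For each $t$ let $\pi^{\log}_t\in\mathbb{R}^{mn}$ have entry $\log\pi^{\mathrm{E}}_t(a^{(k)}|s^{(i)})$ in position $(k-1)n+i$. Define $\mathcal{R}^{\mathrm{E}}$ as the set of pairs $(r,\nu)$, $r=(r_0,\dots,r_{T-1})$,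 $r_t\in\mathbb{R}^{mn}$, $\nu=(\nu_0,\dots,\nu_{T-1})$, $\nu_t\in\mathbb{R}^n$, such that $r_t-\mathbf{E}\nu_t+\gamma\mathbf{P}\nu_{t+1}=\pi^{\log}_t$ for $0\le t\le T-1$, with $\nu_T:=0$. A feasible switch time sequence is a sequence of integers $T>t'_1>t'_2>\dots>t'_{k'}>0$ such that, with $t'_0=T$ and $t'_{k'+1}=0$, there exists $(r,\nu)\in\mathcal{R}^{\mathrm{E}}$ with $r_t$ constant for $t$ in each interval $t'_{i+1}\le t<t'_i$, $i=0,\dots,k'$. For integers $0\le i<j\le T$ and $\nu_o\in\mathbb{R}^n$, let $\mathcal{R}^{\mathrm{inv}}_{i:j}(\nu_o)$ be the set of tuples $(\bar r,\nu_i,\dots,\nu_{j-1})$ with $\bar r\in\mathbb{R}^{mn}$, $\nu_l\in\mathbb{R}^n$, such that $\bar r-\mathbf{E}\nu_l+\gamma\mathbf{P}\nu_{l+1}=\pi^{\log}_l$ for $l=i,\dots,j-1$, where $\nu_j:=\nu_o$. By convention $\mathcal{R}^{\mathrm{inv}}_{-1:j}(\nu_o)=\emptyset$. Algorithm 1 (Greedy Interval Partitioning), input $T,\mathbf{P},\pi^{\mathrm{E}}$: set $Z\leftarrow()$, $R\leftarrow()$, $V_t\leftarrow0\in\mathbb{R}^n$ for $0\le t\le T$; $l\leftarrow-1$, $u\leftarrow T$, $j\leftarrow T-1$, $\tau\leftarrow T$. While $j\ge0$: if $\mathcal{R}^{\mathrm{inv}}_{j:\tau}(V_\tau)\ne\emptyset$,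 set $u\leftarrow j$ and pick some $(\bar r,\bar\nu)\in\mathcal{R}^{\mathrm{inv}}_{j:\tau}(V_\tau)$; otherwise set $l\leftarrow j$, and if moreover $u=l+1$, prepend $u$ to $Z$ and $\bar r$ to $R$, set $V_t\leftarrow\bar\nu_t$ for $t\in[u,\tau-1]$, $\tau\leftarrow u$, $l\leftarrow-1$. In either case then set $j\leftarrow\lfloor(l+u)/2\rfloor$. After the loop, prepend $\bar r$ to $R$, set $V_t\leftarrow\bar\nu_t$ for $t\in[0,\tau-1]$, and return $Z$ (switch times) and $R$. *)

From mathcomp Require Import all_boot all_order all_algebra.
From mathcomp Require Import reals exp.
Set Implicit Arguments.
Unset Strict Implicit.
Unset Printing Implicit Defensive.
Import Order.TTheory GRing.Theory Num.Theory.
Local Open Scope ring_scope.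

Section Setting.
Variable R : realType.
Variables (n m : nat).
(* states s^(i+1) ~ i : 'I_n, actions a^(k+1) ~ k : 'I_m (0-based).
   Tr i k j = T(s^(j) | s^(i), a^(k)); piE t i k = pi^E_t(a^(k) | s^(i)). *)
Variable Tr : 'I_n -> 'I_m -> 'I_n -> R.
Variable gamma : R.
Variable T : nat.
Variable piE : nat -> 'I_n -> 'I_m -> R.

(* position (k-1)n+i of R^{mn}, 0-based: mxvec_index k i (= k*n+i). *)
Definition Pmat : 'M[R]_(m * n, n) :=
  \matrix_(p < m * n, j < n) mxvec (\matrix_(k < m, i < n) Tr i k j) 0 p.
(* E = 1_m (x) I_n *)
Definition Emat : 'M[R]_(m * n, n) :=
  \matrix_(p < m * n, j < n) mxvec (\matrix_(k < m, i < n) (i == j)%:R) 0 p.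
Definition pilog (t : nat) : 'cV[R]_(m * n) :=
  (mxvec (\matrix_(k < m, i < n) ln (piE t i k)))^T.

(* R^E : pairs (r, nu), nu_T := 0 *)
Definition in_RE (r : nat -> 'cV[R]_(m * n)) (nu : nat -> 'cV[R]_n) : Prop :=
  forall t, (t < T)%N ->
    r t - Emat *m nu t + gamma *: (Pmat *m (if t.+1 == T then 0 else nu t.+1))
    = pilog t.

(* Feasible switch time sequence, given as the list [:: t'_1; ...; t'_k'] *)
Definition feasible_switch (s : seq nat) : Prop :=
  sorted gtn s /\ all (fun x => (0 < x < T)%N) s /\
  let b := T :: rcons s 0%N in
  exists r nu, in_RE r nu /\
    forall i, (i <= size s)%N -> forall t1 t2,
      (nth 0 b i.+1 <= t1 < nth 0 b i)%N -> (nth 0 b i.+1 <= t2 < nth 0 b i)%N ->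
      r t1 = r t2.

(* R^inv_{i:j}(nuo): (rbar, nu_i, ..., nu_{j-1}) with nu_j := nuo *)
Definition Rinv (i j : nat) (nuo : 'cV[R]_n) (rbar : 'cV[R]_(m * n))
    (nu : nat -> 'cV[R]_n) : Prop :=
  forall l, (i <= l < j)%N ->
    rbar - Emat *m nu l + gamma *: (Pmat *m (if l.+1 == j then nuo else nu l.+1))
    = pilog l.

Definition Rinv_nonempty (i j : nat) (nuo : 'cV[R]_n) : Prop :=
  exists rbar nu, Rinv i j nuo rbar nu.

(* State of Algorithm 1. (rb, nb) = last picked (rbar, nubar), nb indexed by
   absolute time. *)
Record alg_state := AlgState {
  st_Z : seq int; st_R : seq 'cV[R]_(m * n); st_V : nat -> 'cV[R]_n;
  st_l : int; st_u : int; st_j : int; st_tau : int;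
  st_rb : 'cV[R]_(m * n); st_nb : nat -> 'cV[R]_n }.

Definition alg_init : alg_state :=
  AlgState [::] [::] (fun _ => 0) (-1) T%:Z (T%:Z - 1) T%:Z 0 (fun _ => 0).

(* one iteration of the while loop (nondeterministic in the pick) *)
Inductive alg_step : alg_state -> alg_state -> Prop :=
| step_nonempty Z Rs V l u j tau rb nb rb' nb' :
    (0 <= j) ->
    Rinv `|j|%N `|tau|%N (V `|tau|%N) rb' nb' ->
    alg_step (AlgState Z Rs V l u j tau rb nb)
             (AlgState Z Rs V l j ((l + j) %/ 2)%Z tau rb' nb')
| step_empty_nocommit Z Rs V l u j tau rb nb :
    (0 <= j) ->
    ~ Rinv_nonempty `|j|%N `|tau|%N (V `|tau|%N) ->
    u != j + 1 ->
    alg_step (AlgState Z Rs V l u j tau rb nb)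
             (AlgState Z Rs V j u ((j + u) %/ 2)%Z tau rb nb)
| step_empty_commit Z Rs V l u j tau rb nb :
    (0 <= j) ->
    ~ Rinv_nonempty `|j|%N `|tau|%N (V `|tau|%N) ->
    u = j + 1 ->
    alg_step (AlgState Z Rs V l u j tau rb nb)
             (AlgState (u :: Z) (rb :: Rs)
                (fun t => if (u <= t%:Z) && (t%:Z <= tau - 1) then nb t else V t)
                (-1) u ((-1 + u) %/ 2)%Z u rb nb).

Inductive alg_reaches : alg_state -> alg_state -> Prop :=
| reach_refl s : alg_reaches s s
| reach_step s1 s2 s3 : alg_step s1 s2 -> alg_reaches s2 s3 -> alg_reaches s1 s3.

(* Algorithm 1 may return switch times Z (as the list built by prepending)
   and rewards Rout. *)
Definition alg_returns (Z : seq int) (Rout : seq 'cV[R]_(m * n)) : Prop :=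
  exists s, alg_reaches alg_init s /\ st_j s < 0 /\
    Z = st_Z s /\ Rout = st_rb s :: st_R s.

End Setting.

Definition transition_kernel (R : realType) n m (Tr : 'I_n -> 'I_m -> 'I_n -> R) :=
  forall i k, (forall j, 0 <= Tr i k j) /\ \sum_(j < n) Tr i k j = 1.
Definition expert_policy (R : realType) n m (T : nat) (piE : nat -> 'I_n -> 'I_m -> R) :=
  forall t, (t < T)%N -> forall i,
    (forall k, 0 < piE t i k <= 1) /\ \sum_(k < m) piE t i k = 1.

From mathcomp Require Import all_boot all_order all_algebra.
From mathcomp Require Import reals exp.
Import Order.TTheory GRing.Theory Num.Theory.
Set Implicit Arguments.
Unset Strict Implicit.
Unset Printing Implicit Defensive.
Local Open Scope ring_scope.

(* Every switch time t committed by Algorithm 1 certifies that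
   R^inv_{t-1:tau}(V) is empty for some V, where tau is the previously
   committed time (t_0 = T).  Nonemptiness of R^inv does not depend on the
   terminal value: (rbar, nu) |-> (rbar + E phi - gamma P phi, nu + phi) moves
   it by phi.  A feasible (r, nu) in R^E with r constant on
   [t'_i, t'_{i-1}) restricts to a solution on every subinterval, so if
   t_{i-1} <= t'_{i-1} but t'_i < t_i, the interval [t_i - 1, t_{i-1}) would
   give an element of R^inv_{t_i-1:t_{i-1}}(V) for every V.  Induction on i
   concludes; only the linear shape of the equations is used, not the
   stochasticity of T, gamma or pi^E. *)

Section Greedy.
Variables (R : realType) (n m : nat) (Tr : 'I_n -> 'I_m -> 'I_n -> R).
Variables (gamma : R) (T : nat) (piE : nat -> 'I_n -> 'I_m -> R).

Local Notation E := (@Emat R n m).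
Local Notation P := (Pmat Tr).
Local Notation Rinv := (Rinv Tr gamma piE).
Local Notation Rinv_nonempty := (Rinv_nonempty Tr gamma piE).

Lemma Rinv_translate i j V rb nu phi :
  Rinv i j V rb nu ->
  Rinv i j (V + phi) (rb + E *m phi - gamma *: (P *m phi))
    (fun l => nu l + phi).
Proof.
move=> sol l lij; rewrite -(sol l lij) /=.
set x := (if l.+1 == j then V else nu l.+1).
have -> : (if l.+1 == j then V + phi else nu l.+1 + phi) = x + phi.
  by rewrite /x; case: ifP.
rewrite !mulmxDr scalerDr.
rewrite (addrAC rb) (addrC (E *m nu l)) addrKA.
by rewrite (addrAC rb) (addrC (gamma *: _)) addrA subrK.
Qed.

Lemma Rinv_nonempty_terminal i j V V' :
  Rinv_nonempty i j V -> Rinv_nonempty i j V'.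
Proof.
case=> rb [nu sol]; have -> : V' = V + (V' - V) by rewrite addrC subrK.
by do 2!eexists; exact: Rinv_translate sol.
Qed.

Lemma in_RE_Rinv_nonempty r nu i j rb V :
  in_RE Tr gamma T piE r nu -> (j <= T)%N ->
  (forall l, (i <= l < j)%N -> r l = rb) -> Rinv_nonempty i j V.
Proof.
move=> sol jT r_const.
pose nuT l := if l == T then 0 else nu l.
apply: (Rinv_nonempty_terminal (V := nuT j)).
exists rb, nuT => l /andP [il lj].
have lT : (l < T)%N by exact: leq_trans lj jT.
rewrite -(r_const l) ?il ?lj // -(sol l lT) /nuT (ltn_eqF lT).
by case: eqP => [->|].
Qed.

Lemma feasible_switch_Rinv_nonempty s i a b V :
  feasible_switch Tr gamma T piE s -> (i < size s)%N ->
  (nth 0%N s i <= a)%N -> (b <= nth T (T :: s) i)%N -> Rinv_nonempty a b V.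
Proof.
move=> [_ [s_range [r [nu [sol r_const]]]]] ilt sa bs.
have bT : (nth T (T :: s) i <= T)%N.
  case: i ilt {sa bs} => // k ks /=.
  by case/andP: (allP s_range _ (mem_nth T (ltnW ks))) => _ /ltnW.
have lower : nth 0%N (T :: rcons s 0%N) i.+1 = nth 0%N s i.
  by rewrite /= nth_rcons ilt.
have upper : nth 0%N (T :: rcons s 0%N) i = nth T (T :: s) i.
  case: i ilt {sa bs bT lower} => //= k ks.
  by rewrite nth_rcons (ltnW ks) (set_nth_default T) // ltnW.
apply: (in_RE_Rinv_nonempty (rb := r (nth 0%N s i)) V sol (leq_trans bs bT)).
move=> l /andP [al lb]; have := r_const i (ltnW ilt) l (nth 0%N s i).
rewrite lower upper (leq_trans sa al) leqnn (leq_trans lb bs) /=.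
apply=> //; exact: leq_ltn_trans (leq_trans sa al) (leq_trans lb bs).
Qed.

Definition certified_switches (L : seq nat) : Prop :=
  forall i, (i < size L)%N ->
    exists V, ~ Rinv_nonempty (nth 0%N L i).-1 (nth T (T :: L) i) V.

Lemma certified_switches_rcons L t V :
  certified_switches L -> ~ Rinv_nonempty t.-1 (last T L) V ->
  certified_switches (rcons L t).
Proof.
move=> cert empty i; rewrite size_rcons ltnS leq_eqVlt => /orP [/eqP ->|iL].
  exists V; rewrite nth_rcons ltnn eqxx -rcons_cons nth_rcons /= ltnS leqnn.
  by rewrite -(last_nth T).
have [V' empty'] := cert i iL; exists V'.
by rewrite nth_rcons iL -rcons_cons nth_rcons /= ltnS (ltnW iL).
Qed.

Lemma certified_switches_le_feasible L s :
  certified_switches L -> feasible_switch Tr gamma T piE s ->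
  forall i, (i < size L)%N -> (i < size s)%N -> (nth 0 L i <= nth 0 s i)%N.
Proof.
move=> cert feas.
have step i : (i < size L)%N -> (i < size s)%N ->
    (nth T (T :: L) i <= nth T (T :: s) i)%N -> (nth 0 L i <= nth 0 s i)%N.
  move=> iL ilt bound; rewrite leqNgt; apply/negP => sL.
  have [V empty] := cert i iL; apply: empty.
  apply: (feasible_switch_Rinv_nonempty V feas ilt _ bound).
  by rewrite -ltnS (ltn_predK sL).
elim=> [|k IH] kL ks; apply: step => //=.
rewrite (set_nth_default 0%N) ?(ltnW kL) //.
rewrite (set_nth_default 0%N T) ?(ltnW ks) //.
exact: IH (ltnW kL) (ltnW ks).
Qed.

Definition alg_invariant (st : alg_state R n m) : Prop :=
  exists L, [/\ st_Z st = map Posz (rev L), st_tau st = (last T L)%:Z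
              & certified_switches L].

Lemma alg_step_invariant st st' :
  alg_step Tr gamma piE st st' -> alg_invariant st -> alg_invariant st'.
Proof.
case=> {st st'} // Z Rs V l u j tau rb nb j_ge0 empty -> [L [/= ZL tauL cert]].
have u_def : j + 1 = (`|j|%N.+1)%:Z by rewrite -addn1 PoszD gez0_abs.
exists (rcons L `|j|%N.+1); split => /=.
- by rewrite rev_rcons ZL u_def.
- by rewrite last_rcons u_def.
- rewrite tauL absz_nat in empty.
  exact: (certified_switches_rcons (t := `|j|.+1) cert empty).
Qed.

Lemma alg_reaches_invariant st st' :
  alg_reaches Tr gamma piE st st' -> alg_invariant st -> alg_invariant st'.
Proof. by elim=> // s1 s2 s3 /alg_step_invariant step _ IH /step/IH. Qed.

End Greedy.

(* Z = [:: t_k; ...; t_1] (as returned), so rev Z = [:: t_1; ...; t_k];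
   s = [:: t'_1; ...; t'_k']. *)
Theorem lemma3 (R : realType) (n m : nat) (Tr : 'I_n -> 'I_m -> 'I_n -> R)
    (gamma : R) (T : nat) (piE : nat -> 'I_n -> 'I_m -> R) :
  transition_kernel Tr -> 0 <= gamma <= 1 -> (1 <= T)%N -> expert_policy T piE ->
  forall (Z : seq int) (Rout : seq 'cV[R]_(m * n)),
    alg_returns Tr gamma T piE Z Rout ->
  forall s : seq nat, feasible_switch Tr gamma T piE s ->
  forall i, (i < minn (size Z) (size s))%N -> nth 0 (rev Z) i <= (nth 0%N s i)%:Z.
Proof.
move=> _ _ _ _ Z Rout [st [run [_ [-> _]]]] s feas i.
have [L [-> _ cert]] : alg_invariant Tr gamma T piE st.
  by apply: alg_reaches_invariant run _; exists [::].
rewrite size_map size_rev leq_min map_rev revK => /andP [iL ilt].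
by rewrite (nth_map 0%N) // lez_nat (certified_switches_le_feasible cert feas).
Qed.
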